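(* There exists a constant $c>0$ not depending on $n$ such that $\theta_n(B_n)>c\sqrt n$ for all $n\in\mathbb{N}$. In particular this holds with $$c=\frac{\sqrt[3]{\pi}}{\sqrt{12e}\cdot\sqrt[6]{3}}=0.2135\ldots$$
   Context: $B_n=\{x\in\mathbb{R}^n:\|x\|\le1\}$ (Euclidean norm). $C(B_n)$ is the space of continuous real functions on $B_n$ with the max norm; $\Pi_1(\mathbb{R}^n)$ is the set of polynomials in $n$ variables of degree at most $1$. For a nondegenerate simplex $S\subset B_n$ with vertices $x^{(1)},\dots,x^{(n+1)}$, the corresponding interpolation projector $P:C(B_n)\to\Pi_1(\mathbb{R}^n)$ is defined by $Pf(x^{(j)})=f(x^{(j)})$, and $\|P\|_{B_n}$ is its operator norm on $C(B_n)$ (equivalently $\max_{x\in B_n}\sum_j|\lambda_j(x)|$ with $\lambda_j(x)$ the barycentric coordinates of $x$ with respect to $S$). $\theta_n(B_n)$ is the minimal value of $\|P\|_{B_n}$ over all nondegenerate simplices with vertices in $B_n$. *)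

From HB Require Import structures.
From mathcomp Require Import all_boot all_order all_algebra.
From mathcomp Require Import all_classical all_reals all_analysis.
Set Implicit Arguments. Unset Strict Implicit. Unset Printing Implicit Defensive.
Import Order.TTheory GRing.Theory Num.Theory.
Local Open Scope classical_set_scope.
Local Open Scope ring_scope.

Section Defs.
Variable R : realType.

Definition in_ball (n : nat) (x : 'rV[R]_n) : Prop :=
  \sum_(i < n) (x ord0 i) ^+ 2 <= 1.

Definition is_bary (n : nat) (S : 'I_n.+1 -> 'rV[R]_n) (x : 'rV[R]_n)
    (l : 'I_n.+1 -> R) : Prop :=
  \sum_(j < n.+1) l j = 1 /\ \sum_(j < n.+1) l j *: S j = x.

Definition nondegenerate (n : nat) (S : 'I_n.+1 -> 'rV[R]_n) : Prop :=
  forall mu : 'I_n.+1 -> R,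
    \sum_(j < n.+1) mu j = 0 -> \sum_(j < n.+1) mu j *: S j = 0 ->
    forall j, mu j = 0.

Definition proj_norm (n : nat) (S : 'I_n.+1 -> 'rV[R]_n) : R :=
  sup [set s : R | exists (x : 'rV[R]_n) (l : 'I_n.+1 -> R),
         in_ball x /\ is_bary S x l /\ s = \sum_(j < n.+1) `|l j|].

Definition theta (n : nat) : R :=
  inf [set p : R | exists S : 'I_n.+1 -> 'rV[R]_n,
         (forall j, in_ball (S j)) /\ nondegenerate S /\ p = proj_norm S].

Definition c_const : R :=
  pi `^ (3^-1) / (Num.sqrt (12 * expR 1) * 3 `^ (6^-1)).

End Defs.

(** The barycentric coordinates of a nondegenerate simplex are affine,
    [lambda_j(x) = b_j + <x, a_j>].  For two vertices [x^(j)], [x^(k)] we have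
    [<x^(j) - x^(k), a_j> = 1] with [|x^(j) - x^(k)| <= 2], so every gradient
    satisfies [|a_j| >= 1/2].  Choosing the signs [e_j = +-1] greedily gives
    [|sum_j e_j a_j|^2 >= sum_j |a_j|^2 >= (n+1)/4], and at a suitable unit
    vector [x] the affine function [sum_j e_j lambda_j] has absolute value at
    least [|sum_j e_j a_j|].  Hence [||P|| >= sqrt(n+1)/2] for every simplex,
    and the explicit constant is smaller than [1/2]. *)
From Pilot Require Import Defs.
From HB Require Import structures.
From mathcomp Require Import all_boot all_order all_algebra.
From mathcomp Require Import all_classical all_reals all_analysis.
From mathcomp Require Import ring lra.
Import Order.TTheory GRing.Theory Num.Theory.
Local Open Scope ring_scope.

Lemma exists_signs_sum_sqr_le {R : realFieldType} {I : finType} {m}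
    (a : 'I_m -> I -> R) :
  exists e : 'I_m -> R, (forall k, `|e k| = 1) /\
    \sum_k \sum_i a k i ^+ 2 <= \sum_i (\sum_k e k * a k i) ^+ 2.
Proof.
elim: m a => [|m IHm] a.
  exists (fun=> 1); split=> [k|]; first exact: normr1.
  by rewrite big_ord0; apply: sumr_ge0 => i _; exact: sqr_ge0.
have [e [e_sign le_e]] := IHm (fun k => a (lift ord0 k)).
pose v i := \sum_k e k * a (lift ord0 k) i.
pose d := \sum_i v i * a ord0 i.
pose s : R := if 0 <= d then 1 else -1.
have s_sqr : s ^+ 2 = 1 by rewrite /s; case: ifP; rewrite ?sqrrN expr1n.
have sd_ge0 : 0 <= s * d.
  by rewrite /s; case: (leP 0 d) => [|/ltW] d0; rewrite ?mul1r // mulN1r oppr_ge0.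
exists (fun k => if unlift ord0 k is Some k' then e k' else s); split.
  move=> k; case: unlift => [k'|] //.
  by rewrite /s; case: ifP; rewrite ?normrN normr1.
have sum_recl i : \sum_k (if unlift ord0 k is Some k' then e k' else s) * a k i
                  = s * a ord0 i + v i.
  rewrite big_ord_recl unlift_none; congr (_ + _).
  by apply: eq_bigr => k _; rewrite liftK.
rewrite (eq_bigr _ (fun i _ => congr1 (fun t => t ^+ 2) (sum_recl i))).
have -> : \sum_i (s * a ord0 i + v i) ^+ 2
          = \sum_i a ord0 i ^+ 2 + \sum_i v i ^+ 2 + 2 * (s * d).
  rewrite /d mulr_sumr mulr_sumr -!big_split /=; apply: eq_bigr => i _.
  by rewrite sqrrD exprMn s_sqr; ring.
rewrite big_ord_recl /=; lra.
Qed.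

Lemma sum_sqr_ge_of_dot_eq1 (R : realFieldType) (I : finType) (u w : I -> R) :
  \sum_i u i * w i = 1 -> \sum_i u i ^+ 2 <= 4 -> 1 / 4 <= \sum_i w i ^+ 2.
Proof.
move=> uw1 u_le4.
have : \sum_i u i * w i <= \sum_i (u i ^+ 2 / 8 + 2 * w i ^+ 2).
  by apply: ler_sum => i _; have := sqr_ge0 (w i - u i / 4); nra.
rewrite big_split /= -mulr_suml -mulr_sumr uw1; lra.
Qed.

Section Ball.
Context {R : realType} {n : nat}.

Lemma in_ball_coord_le1 (x : 'rV[R]_n) i : in_ball x -> `|x 0 i| <= 1.
Proof.
move=> x_ball; rewrite -(expr_le1 (n := 2)) // real_normK ?num_real //.
apply: le_trans x_ball; rewrite (bigD1 i) //= lerDl.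
by apply: sumr_ge0 => *; exact: sqr_ge0.
Qed.

Lemma in_ball_sum_sqr_sub_le4 (x y : 'rV[R]_n) :
  in_ball x -> in_ball y -> \sum_i (x 0 i - y 0 i) ^+ 2 <= 4.
Proof.
rewrite /in_ball => x_ball y_ball.
apply: (@le_trans _ _ (\sum_i (2 * x 0 i ^+ 2 + 2 * y 0 i ^+ 2))).
  by apply: ler_sum => i _; have := sqr_ge0 (x 0 i + y 0 i); nra.
rewrite big_split /= -!mulr_sumr; lra.
Qed.

Lemma exists_in_ball_affine_ge (b : R) (v : 'I_n -> R) :
  exists x : 'rV[R]_n, in_ball x /\
    Num.sqrt (\sum_i v i ^+ 2) <= `|b + \sum_i x 0 i * v i|.
Proof.
set r := Num.sqrt _.
have r_sqr : r ^+ 2 = \sum_i v i ^+ 2.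
  by rewrite sqr_sqrtr //; apply: sumr_ge0 => i _; exact: sqr_ge0.
have [->|r_neq0] := eqVneq r 0.
  exists 0; split; last exact: normr_ge0.
  by rewrite /in_ball big1 // => i _; rewrite mxE expr0n.
have r_gt0 : 0 < r by rewrite lt_def r_neq0 sqrtr_ge0.
pose s : R := if 0 <= b then 1 else -1.
exists (\row_i (s / r * v i)); split.
  rewrite /in_ball; under eq_bigr do rewrite mxE exprMn.
  rewrite -mulr_sumr -r_sqr -exprMn divfK // /s.
  by case: ifP; rewrite ?sqrrN expr1n.
have -> : \sum_i (\row_i (s / r * v i)) 0 i * v i = s * r.
  under eq_bigr do rewrite mxE -mulrA -expr2.
  by rewrite -mulr_sumr -r_sqr expr2 mulrA divfK.
rewrite /s; case: (leP 0 b) => b0.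
  by rewrite mul1r ger0_norm; lra.
by rewrite mulN1r ler0_norm; lra.
Qed.

End Ball.

Section Barycentric.
Variables (R : realType) (n : nat) (S : 'I_n.+1 -> 'rV[R]_n).

Definition vertex_mx : 'M[R]_n.+1 :=
  row_mx (const_mx 1 : 'cV_n.+1) (\matrix_j S j).

Lemma mul_vertex_mx (u : 'rV[R]_n.+1) :
  u *m vertex_mx = row_mx (\sum_j u 0 j)%:M (\sum_j u 0 j *: S j) :> 'rV_(1 + n).
Proof.
apply: (etrans (mul_mx_row u _ _)); congr row_mx.
  apply/rowP => i; rewrite ord1 !mxE eqxx mulr1n.
  by apply: eq_bigr => j _; rewrite mxE mulr1.
by rewrite mulmx_sum_row; apply: eq_bigr => j _; rewrite rowK.
Qed.

Lemma is_bary_mulmx (l : 'I_n.+1 -> R) x :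
  is_bary S x l <-> (\row_j l j) *m vertex_mx = row_mx 1 x.
Proof.
have row_lE j : (\row_j l j) 0 j = l j by rewrite mxE.
rewrite mul_vertex_mx (eq_bigr _ (fun j _ => row_lE j)).
rewrite (eq_bigr (fun j => l j *: S j)) => [|j _]; last by rewrite row_lE.
split=> [[-> <-] // | /(@eq_row_mx _ 1 1 n)[/rowP/(_ 0) l1 lx]].
by split=> //; move: l1; rewrite !mxE.
Qed.

(* Unqualified, [nondegenerate] would resolve to the notion for bilinear forms. *)
Hypothesis S_nd : Defs.nondegenerate S.

Lemma vertex_mx_unit : vertex_mx \in unitmx.
Proof.
rewrite -row_free_unit -kermx_eq0; apply/eqP/row_matrixP => i.
set mu := row i (kermx vertex_mx).
have : mu *m vertex_mx = row_mx 0 0 :> 'rV_(1 + n).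
  by rewrite -row_mul mulmx_ker row0 row_mx0.
rewrite mul_vertex_mx => /(@eq_row_mx _ 1 1 n)[/rowP/(_ 0) mu_sum mu_S].
apply/rowP => j; rewrite row0 [RHS]mxE; apply: (S_nd (fun j => mu 0 j) _ mu_S).
by move: mu_sum; rewrite !mxE.
Qed.

Definition bary (x : 'rV[R]_n) : 'rV[R]_n.+1 := row_mx 1 x *m invmx vertex_mx.

Lemma is_bary_bary x : is_bary S x (fun j => bary x 0 j).
Proof.
apply/is_bary_mulmx; rewrite (_ : \row_j _ = bary x).
  by rewrite mulmxKV // vertex_mx_unit.
by apply/rowP => j; rewrite mxE.
Qed.

Lemma is_bary_eq_bary x l : is_bary S x l -> forall j, l j = bary x 0 j.
Proof.
by move/is_bary_mulmx => lS j; rewrite /bary -lS mulmxK ?vertex_mx_unit // mxE.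
Qed.

Lemma bary_vertex k j : bary (S k) 0 j = (j == k)%:R.
Proof.
symmetry; apply: (@is_bary_eq_bary _ (fun j => (j == k)%:R)); split.
  by rewrite (bigD1 k) //= eqxx big1 ?addr0 // => i /negPf ->.
by rewrite (bigD1 k) //= eqxx scale1r big1 ?addr0 // => i /negPf ->; rewrite scale0r.
Qed.

Definition bary_offset : 'rV[R]_n.+1 :=
  usubmx (invmx vertex_mx : 'M[R]_(1 + n, n.+1)).
Definition bary_grad : 'M[R]_(n, n.+1) :=
  dsubmx (invmx vertex_mx : 'M[R]_(1 + n, n.+1)).

Lemma baryE x j : bary x 0 j = bary_offset 0 j + \sum_i x 0 i * bary_grad i j.
Proof.
rewrite /bary.
have -> : invmx vertex_mx = col_mx bary_offset bary_grad by rewrite vsubmxK.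
by rewrite mul_row_col mul1mx !mxE.
Qed.

Hypothesis S_ball : forall j, in_ball (S j).

Lemma sum_sqr_bary_grad_ge (n_gt0 : (0 < n)%N) j :
  1 / 4 <= \sum_i bary_grad i j ^+ 2.
Proof.
pose k := lift j (Ordinal n_gt0).
apply: (@sum_sqr_ge_of_dot_eq1 _ _ (fun i => S j 0 i - S k 0 i)); last first.
  exact: in_ball_sum_sqr_sub_le4.
have := bary_vertex j j; have := bary_vertex k j.
rewrite !baryE eqxx (negPf (neq_lift _ _)) /= => bary_k bary_j.
rewrite (eq_bigr _ (fun i _ => mulrBl _ _ _)) sumrB; lra.
Qed.

Lemma sum_abs_bary_le_proj_norm x :
  in_ball x -> \sum_j `|bary x 0 j| <= proj_norm S.
Proof.
move=> x_ball; apply: ub_le_sup; last first.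
  by exists x, (fun j => bary x 0 j); split; [|split; [exact: is_bary_bary|]].
exists (\sum_j (`|bary_offset 0 j| + \sum_i `|bary_grad i j|)).
move=> _ [y [l [y_ball [/is_bary_eq_bary l_bary ->]]]].
apply: ler_sum => j _; rewrite l_bary baryE.
apply: (le_trans (ler_normD _ _)); rewrite lerD2l.
apply: (le_trans (ler_norm_sum _ _ _)); apply: ler_sum => i _.
by rewrite normrM ler_piMl ?normr_ge0 ?in_ball_coord_le1.
Qed.

Lemma exists_in_ball_sum_abs_bary_ge (n_gt0 : (0 < n)%N) :
  exists2 x, in_ball x & Num.sqrt n.+1%:R / 2 <= \sum_j `|bary x 0 j|.
Proof.
have [e [e_sign grad_sum_le]] :=
  exists_signs_sum_sqr_le (fun j i => bary_grad i j).
pose v i := \sum_j e j * bary_grad i j.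
have [x [x_ball v_le]] :=
  exists_in_ball_affine_ge (\sum_j e j * bary_offset 0 j) v.
exists x => //.
have sum_e_bary : \sum_j e j * bary x 0 j
                  = \sum_j e j * bary_offset 0 j + \sum_i x 0 i * v i.
  under eq_bigr do rewrite baryE mulrDr.
  rewrite big_split /=; congr (_ + _).
  under [RHS]eq_bigr do rewrite mulr_sumr.
  rewrite exchange_big /=; apply: eq_bigr => j _; rewrite mulr_sumr.
  by apply: eq_bigr => i _; ring.
have v_large : n.+1%:R / 4 <= \sum_i v i ^+ 2.
  apply: le_trans grad_sum_le.
  apply: (le_trans _ (ler_sum _ (fun j _ => sum_sqr_bary_grad_ge n_gt0 j))).
  by rewrite sumr_const card_ord -mulr_natr; lra.
have sqrt_le : Num.sqrt n.+1%:R / 2 <= Num.sqrt (\sum_i v i ^+ 2).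
  rewrite -ler_sqr ?nnegrE ?divr_ge0 ?sqrtr_ge0 // exprMn !sqr_sqrtr ?ler0n //.
    by apply: le_trans v_large; rewrite expr2; lra.
  by apply: sumr_ge0 => i _; exact: sqr_ge0.
apply: (le_trans sqrt_le); apply: (le_trans v_le).
rewrite -sum_e_bary; apply: (le_trans (ler_norm_sum _ _ _)).
by apply: ler_sum => j _; rewrite normrM e_sign mul1r.
Qed.

Lemma proj_norm_ge_sqrt (n_gt0 : (0 < n)%N) :
  Num.sqrt n.+1%:R / 2 <= proj_norm S.
Proof.
have [x x_ball le_sum] := exists_in_ball_sum_abs_bary_ge n_gt0.
exact: (le_trans le_sum (sum_abs_bary_le_proj_norm _ x_ball)).
Qed.

End Barycentric.

Section StandardSimplex.
Context {R : realType} {n : nat}.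

Definition std_simplex : 'I_n.+1 -> 'rV[R]_n :=
  fun j => \row_i (j == lift ord0 i)%:R.

Lemma in_ball_std_simplex j : in_ball (std_simplex j).
Proof.
rewrite /in_ball; under eq_bigr do rewrite mxE.
case: (unliftP ord0 j) => [i ->|->]; last first.
  by rewrite big1 // => i _; rewrite (negPf (neq_lift _ _)) expr0n.
rewrite (bigD1 i) //= eqxx expr1n big1 ?addr0 // => i' i'_neq.
by rewrite (inj_eq lift_inj) eq_sym (negPf i'_neq) expr0n.
Qed.

Lemma std_simplex_nondegenerate : Defs.nondegenerate std_simplex.
Proof.
move=> mu sum_mu sum_mu_S.
have mu_lift i : mu (lift ord0 i) = 0.
  move/rowP/(_ i): sum_mu_S.
  rewrite summxE mxE (bigD1 (lift ord0 i)) //= !mxE eqxx.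
  rewrite big1 => [|j /negPf j_neq]; last by rewrite !mxE j_neq mulr0.
  by rewrite mulr1 addr0.
have mu_0 : mu ord0 = 0.
  by move: sum_mu; rewrite big_ord_recl big1 ?addr0 // => i _; rewrite mu_lift.
by move=> j; case: (unliftP ord0 j) => [i ->|->].
Qed.

End StandardSimplex.

Lemma theta_ge_sqrt (R : realType) n :
  (0 < n)%N -> Num.sqrt n.+1%:R / 2 <= theta R n.
Proof.
move=> n_gt0; apply: lb_le_inf.
  exists (proj_norm (@std_simplex R n)), std_simplex.
  split; first exact: in_ball_std_simplex.
  by split; first exact: std_simplex_nondegenerate.
by move=> _ [S [S_ball [S_nd ->]]]; exact: proj_norm_ge_sqrt.
Qed.

Lemma c_const_gt0 (R : realType) : 0 < c_const R.
Proof.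
apply: divr_gt0; first exact/powR_gt0/pi_gt0.
by rewrite mulr_gt0 ?powR_gt0 // sqrtr_gt0 mulr_gt0 ?expR_gt0.
Qed.

Lemma c_const_lt_half (R : realType) : c_const R < 1 / 2.
Proof.
have cbrt_pi_lt2 : pi `^ 3^-1 < 2 :> R.
  have -> : 2 = 8 `^ 3^-1 :> R.
    have -> : 8 = 2 `^ 3%:R :> R by rewrite powR_mulrn // !exprS expr0; lra.
    by rewrite -powRrM mulfV // powRr1.
  have := @pi_ge0 R; have := @pihalf_lt2 R => pi_lt4 pi_ge0.
  by apply: gt0_ltr_powR; rewrite ?invr_gt0 ?qualifE //=; lra.
have sqrt_ge4 : 4 <= Num.sqrt (12 * expR 1) :> R.
  have e_ge2 : 2 <= expR 1 :> R by have := expR_ge1Dx (1 : R); lra.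
  have -> : 4 = Num.sqrt (4 ^+ 2) :> R by rewrite sqrtr_sqr ger0_norm.
  by rewrite ler_sqrt ?expr2; lra.
have root6_ge1 : 1 <= 3 `^ 6^-1 :> R.
  by rewrite -[X in X <= _](powRr0 3) ler_powR ?invr_ge0; lra.
have := @powR_ge0 R pi 3^-1.
rewrite /c_const ltr_pdivrMr; last by rewrite mulr_gt0 ?powR_gt0; lra.
nra.
Qed.

Theorem theorem2 (R : realType) :
  (exists c : R, 0 < c /\ forall n : nat, (1 <= n)%N -> c * Num.sqrt n%:R < theta R n)
  /\ 0 < c_const R
  /\ forall n : nat, (1 <= n)%N -> c_const R * Num.sqrt n%:R < theta R n.
Proof.
have c_bound n : (1 <= n)%N -> c_const R * Num.sqrt n%:R < theta R n.
  move=> n_gt0; apply: lt_le_trans (theta_ge_sqrt R n n_gt0).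
  have := c_const_lt_half R; have := c_const_gt0 R; have := sqrtr_ge0 (n%:R : R).
  have : Num.sqrt n%:R < Num.sqrt n.+1%:R :> R by rewrite ltr_sqrt ?ltr0n // ltr_nat.
  nra.
have c_gt0 := c_const_gt0 R.
by split; [exists (c_const R) | split].
Qed.
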